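(* Under the DS scheme described in the context, suppose every driver $d$ and rider $r$ reports $b_d=\bar b_d+\varepsilon_d$ and $\delta_r=\bar\delta_r+\varepsilon_r$, with arbitrary $\varepsilon_d,\varepsilon_r\in\mathbb{R}$. Then the total utility $\sum_{d\in\mathcal{D}^*}u_d+\sum_{r\in\mathcal{R}^*}u_r$ of the matched participants is a constant, equal to the total social welfare $\bar V$ obtained without any mis-reporting.
   Context: One decision epoch with finite sets $\mathcal{D}$ (drivers) and $\mathcal{R}$ (riders). Rider $r$ requests a trip of shortest-route length $h_r$ with destination $t_r$; $\tau_{dr}\ge0$ is the pick-up distance from driver $d$ to rider $r$, $\tau_d^{\min}=\min_{r}\tau_{dr}$, $\tau_r^{\min}=\min_d\tau_{dr}$. Public constants $\alpha,\beta>0$; $f(t_r)$ is a given opportunity cost. Driver $d$ has a private true bid $\bar b_d$ and rider $r$ a private true bid $\bar\delta_r$. For a potential match $(d,r)$ and bids $b,\delta$ the valuations are $P_d(b)=\alpha h_r+b(\tau_{dr}-\tau_d^{\min})+f(t_r)$ and $P_r(\delta)=\beta h_r-\delta(\tau_{dr}-\tau_r^{\min})$; the social welfare from reported bids is $\sigma_{dr}=P_r(\delta_r)-P_d(b_d)$ and from true bids $\bar\sigma_{dr}=P_r(\bar\delta_r)-P_d(\bar b_d)$. Each potential match has a sensing gain $\zeta_{dr}\ge0$ not depending on bids. DS matching problem: maximize $\sum_{r,d}\zeta_{dr}x_{dr}$ subject to $\sum_r x_{dr}\le1$ $\forall d$, $\sum_d x_{dr}\le 1$ $\forall r$, $\sum_{r,d}\sigma_{dr}x_{dr}\ge0$,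 $x_{dr}\in\{0,1\}$; let $x^*$ be the resulting matching with value $U^*$, $\mathcal{D}^*,\mathcal{R}^*$ the matched drivers and riders, $V=\sum_{r,d}\sigma_{dr}x^*_{dr}$ (reported) and $\bar V=\sum_{r,d}\bar\sigma_{dr}x^*_{dr}$ (true). For $d\in\mathcal{D}^*$, $\Delta U_d=U^*-U^*_{d-}$ where $U^*_{d-}$ is the optimal value with $d$ removed; analogously $\Delta U_r$. Shares $\lambda_d=\Delta U_d/(\sum_{d'\in\mathcal{D}^*}\Delta U_{d'}+\sum_{r'\in\mathcal{R}^*}\Delta U_{r'})$, $\lambda_r$ analogously (these shares sum to one); bonuses $\rho_d=V\lambda_d$, $\rho_r=V\lambda_r$; a matched driver is paid $q_d=P_d(b_d)+\rho_d$ and a matched rider charged $q_r=P_r(\delta_r)-\rho_r$. Utilities are measured with true valuations: $u_d=q_d-P_d(\bar b_d)$, $u_r=P_r(\bar\delta_r)-q_r$. *)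

From HB Require Import structures.
From mathcomp Require Import all_boot all_order all_algebra.
Set Implicit Arguments. Unset Strict Implicit. Unset Printing Implicit Defensive.
Import Order.TTheory GRing.Theory Num.Theory.
Local Open Scope ring_scope.

(* One decision epoch of the DS (double-sided) matching scheme.
   Public data: alpha beta, trip lengths h r, opportunity costs fc r = f(t_r),
   pick-up distances tau d r, sensing gains zeta d r. *)
Record market (R : realFieldType) (Drv Rdr : finType) := Market {
  alpha : R;
  beta  : R;
  h     : Rdr -> R;
  fc    : Rdr -> R;
  tau   : Drv -> Rdr -> R;
  zeta  : Drv -> Rdr -> R }.

Section DS.
Variables (R : realFieldType) (Drv Rdr : finType) (M : market R Drv Rdr).

(* tau_d^min = min_r tau_{dr}  (0 if there are no riders, irrelevant then) *)
Definition tau_dmin (d : Drv) : R :=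
  if [pick r : Rdr] is Some r0 then \big[Num.min/tau M d r0]_(r : Rdr) tau M d r
  else 0.
Definition tau_rmin (r : Rdr) : R :=
  if [pick d : Drv] is Some d0 then \big[Num.min/tau M d0 r]_(d : Drv) tau M d r
  else 0.

Definition Pd (d : Drv) (r : Rdr) (b : R) : R :=
  alpha M * h M r + b * (tau M d r - tau_dmin d) + fc M r.
Definition Pr (d : Drv) (r : Rdr) (delta : R) : R :=
  beta M * h M r - delta * (tau M d r - tau_rmin r).

Definition sigma (b : Drv -> R) (delta : Rdr -> R) (d : Drv) (r : Rdr) : R :=
  Pr d r (delta r) - Pd d r (b d).

Definition matching := {ffun Drv * Rdr -> bool}.

Definition welfare (b : Drv -> R) (delta : Rdr -> R) (x : matching) : R :=
  \sum_(p | x p) sigma b delta p.1 p.2.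

Definition feasible (b : Drv -> R) (delta : Rdr -> R) (x : matching) : bool :=
  [&& [forall d, #|[pred r | x (d, r)]| <= 1]%N,
      [forall r, #|[pred d | x (d, r)]| <= 1]%N &
      0 <= welfare b delta x].

Definition value (x : matching) : R := \sum_(p | x p) zeta M p.1 p.2.

(* optimal value of the DS problem restricted to pairs in S
   (the empty matching is always feasible, with value 0) *)
Definition Uopt (b : Drv -> R) (delta : Rdr -> R) (S : pred (Drv * Rdr)) : R :=
  \big[Num.max/0]_(x : matching | feasible b delta x && [forall p, x p ==> S p])
     value x.

Definition optimal (b : Drv -> R) (delta : Rdr -> R) (x : matching) : Prop :=
  feasible b delta x /\ value x = Uopt b delta predT.

Section Scheme.
Variables (b : Drv -> R) (delta : Rdr -> R) (bbar : Drv -> R) (dbar : Rdr -> R)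
          (x : matching).

Definition matchedD (d : Drv) : bool := [exists r, x (d, r)].
Definition matchedR (r : Rdr) : bool := [exists d, x (d, r)].
Definition partnerD (d : Drv) : option Rdr := [pick r | x (d, r)].
Definition partnerR (r : Rdr) : option Drv := [pick d | x (d, r)].

Definition DeltaUd (d : Drv) : R :=
  Uopt b delta predT - Uopt b delta (fun p => p.1 != d).
Definition DeltaUr (r : Rdr) : R :=
  Uopt b delta predT - Uopt b delta (fun p => p.2 != r).

Definition share_denom : R :=
  \sum_(d | matchedD d) DeltaUd d + \sum_(r | matchedR r) DeltaUr r.

Definition lambdaD (d : Drv) : R := DeltaUd d / share_denom.
Definition lambdaR (r : Rdr) : R := DeltaUr r / share_denom.

(* V : welfare of x with reported bids;  Vbar : with true bids *)
Definition V : R := welfare b delta x.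
Definition Vbar : R := welfare bbar dbar x.

Definition rhoD (d : Drv) : R := V * lambdaD d.
Definition rhoR (r : Rdr) : R := V * lambdaR r.

(* payment to matched driver d, charge to matched rider r *)
Definition qD (d : Drv) : R :=
  if partnerD d is Some r then Pd d r (b d) + rhoD d else 0.
Definition qR (r : Rdr) : R :=
  if partnerR r is Some d then Pr d r (delta r) - rhoR r else 0.

Definition uD (d : Drv) : R :=
  if partnerD d is Some r then qD d - Pd d r (bbar d) else 0.
Definition uR (r : Rdr) : R :=
  if partnerR r is Some d then Pr d r (dbar r) - qR r else 0.

Definition total_utility : R :=
  \sum_(d | matchedD d) uD d + \sum_(r | matchedR r) uR r.

End Scheme.
End DS.

From HB Require Import structures.
From mathcomp Require Import all_boot all_order all_algebra.
From mathcomp Require Import ring.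
Import Order.TTheory GRing.Theory Num.Theory.
Local Open Scope ring_scope.

(* A matched driver's utility is his bonus plus the gap Pd(b) - Pd(bbar)
   between his reported and true valuation of his own match, and likewise
   Pr(dbar) - Pr(delta) for a rider.  Since x is one-to-one, summing these gaps
   over matched participants is summing sigma(bbar) - sigma(b) over matched
   pairs, i.e. Vbar - V, while the bonuses split V exactly because the shares
   sum to one (if nothing is matched, V = 0).  The mis-reports therefore cancel;
   neither their size nor the optimality of x plays any role. *)

Lemma big_card_le1 (V : nmodType) (J : finType) (Q : pred J) (F : J -> V) :
  (#|Q| <= 1)%N -> \sum_(j | Q j) F j = oapp F 0 [pick j | Q j].
Proof.
move=> /card_le1_eqP Q1; case: pickP => [j0 Qj0 | Q0] /=; last exact: big_pred0.
rewrite (bigD1 j0) //= big1 ?addr0 // => j /andP[Qj /eqP[]].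
exact: Q1.
Qed.

Lemma big_pair_rows (V : nmodType) (I J : finType) (P : pred (I * J))
    (F : I -> J -> V) :
  (forall i, #|[pred j | P (i, j)]| <= 1)%N ->
  \sum_(p | P p) F p.1 p.2 = \sum_i oapp (F i) 0 [pick j | P (i, j)].
Proof.
move=> P1; rewrite (eq_bigl (fun p => predT p.1 && P (p.1, p.2))) => [|[]//].
rewrite -(pair_big_dep predT (fun i j => P (i, j)) F).
by apply: eq_bigr => i _; rewrite big_card_le1 ?P1.
Qed.

Section Utilities.
Variables (R : realFieldType) (Drv Rdr : finType) (M : market R Drv Rdr).
Variables (b bbar : Drv -> R) (delta dbar : Rdr -> R) (x : matching Drv Rdr).

Lemma matchedD_partnerD d : matchedD x d = isSome (partnerD x d).
Proof.
rewrite /matchedD /partnerD; case: pickP => [r xr | none].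
  by apply/existsP; exists r.
by apply/existsP => -[r]; rewrite none.
Qed.

Lemma matchedR_partnerR r : matchedR x r = isSome (partnerR x r).
Proof.
rewrite /matchedR /partnerR; case: pickP => [d xd | none].
  by apply/existsP; exists d.
by apply/existsP => -[d]; rewrite none.
Qed.

Lemma uD_matched d : matchedD x d ->
  uD M b delta bbar x d =
  oapp (fun r => Pd M d r (b d) - Pd M d r (bbar d)) 0 (partnerD x d)
  + rhoD M b delta x d.
Proof.
rewrite matchedD_partnerD /uD /qD; case: partnerD => //= r _.
by rewrite addrAC.
Qed.

Lemma uR_matched r : matchedR x r ->
  uR M b delta dbar x r =
  oapp (fun d => Pr M d r (dbar r) - Pr M d r (delta r)) 0 (partnerR x r)
  + rhoR M b delta x r.
Proof.
rewrite matchedR_partnerR /uR /qR; case: partnerR => //= d _.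
by rewrite opprB addrA addrAC.
Qed.

Lemma sum_rho :
  ((exists p, x p) -> share_denom M b delta x != 0) ->
  \sum_(d | matchedD x d) rhoD M b delta x d +
  \sum_(r | matchedR x r) rhoR M b delta x r = V M b delta x.
Proof.
move=> denom_neq0.
rewrite /rhoD /rhoR /lambdaD /lambdaR -!mulr_sumr -!mulr_suml -mulrDr -mulrDl.
have [/existsP[p xp] | unmatched] := boolP [exists p, x p].
  by rewrite mulfV ?mulr1 //; apply: denom_neq0; exists p.
rewrite /V /welfare big_pred0 ?mul0r // => p.
by apply: contraNF unmatched => xp; apply/existsP; exists p.
Qed.

Hypothesis drivers_once : forall d, (#|[pred r | x (d, r)]| <= 1)%N.
Hypothesis riders_once : forall r, (#|[pred d | x (d, r)]| <= 1)%N.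

Lemma sum_matching_by_drivers (F : Drv -> Rdr -> R) :
  \sum_(p | x p) F p.1 p.2 =
  \sum_(d | matchedD x d) oapp (F d) 0 (partnerD x d).
Proof.
rewrite [RHS]big_rmcond => [|d]; last first.
  by rewrite matchedD_partnerD; case: partnerD.
exact: big_pair_rows.
Qed.

Lemma sum_matching_by_riders (F : Drv -> Rdr -> R) :
  \sum_(p | x p) F p.1 p.2 =
  \sum_(r | matchedR x r) oapp (F^~ r) 0 (partnerR x r).
Proof.
rewrite [RHS]big_rmcond => [|r]; last first.
  by rewrite matchedR_partnerR; case: partnerR.
rewrite (reindex (fun q : Rdr * Drv => (q.2, q.1))) /=; last first.
  by exists (fun p : Drv * Rdr => (p.2, p.1)) => -[].
exact: (@big_pair_rows _ _ _ (fun q => x (q.2, q.1)) (fun r d => F d r)).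
Qed.

Lemma total_utility_eq_Vbar :
  ((exists p, x p) -> share_denom M b delta x != 0) ->
  total_utility M b delta bbar dbar x = Vbar M bbar dbar x.
Proof.
move=> denom_neq0.
rewrite /total_utility (eq_bigr _ uD_matched) (eq_bigr _ uR_matched).
rewrite !big_split /= addrACA sum_rho //.
rewrite -sum_matching_by_drivers -sum_matching_by_riders /V /Vbar /welfare.
rewrite -!big_split /=; apply: eq_bigr => p _.
by rewrite /sigma; ring.
Qed.

End Utilities.

Theorem proposition4 (R : realFieldType) (Drv Rdr : finType)
  (M : market R Drv Rdr)
  (Halpha : 0 < alpha M) (Hbeta : 0 < beta M)
  (Htau : forall d r, 0 <= tau M d r) (Hzeta : forall d r, 0 <= zeta M d r)
  (bbar : Drv -> R) (dbar : Rdr -> R) (epsD : Drv -> R) (epsR : Rdr -> R)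
  (x : matching Drv Rdr) :
  let b := fun d => bbar d + epsD d in
  let delta := fun r => dbar r + epsR r in
  optimal M b delta x ->
  (* the shares lambda are well defined whenever something is matched *)
  ((exists p, x p) -> share_denom M b delta x != 0) ->
  total_utility M b delta bbar dbar x = Vbar M bbar dbar x.
Proof.
move=> b delta [/and3P[/forallP drivers_once /forallP riders_once _] _].
exact: total_utility_eq_Vbar.
Qed.
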